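(* Assume (A1) and let $\alpha\in\mathbb R$. Let $\mathsf M$ be a convex subset of $\mathcal M_1(\mathsf T)$ and let $\zeta_1,\zeta_2\in\mathsf M$ satisfy $\Psi_\alpha(\zeta_1)=\Psi_\alpha(\zeta_2)=\inf_{\zeta\in\mathsf M}\Psi_\alpha(\zeta)<\infty$. Then $\zeta_1K=\zeta_2K$.
   Context: Let $(\mathsf Y,\mathcal Y,\nu)$ be a measure space with $\nu$ $\sigma$-finite, $(\mathsf T,\mathcal T)$ a measurable space and $\mathcal M_1(\mathsf T)$ its probability measures. Let $k:\mathsf T\times\mathsf Y\to[0,\infty)$ be measurable with $\int k(\theta,y)\nu(dy)=1$, $K(\theta,A)=\int_Ak(\theta,y)\nu(dy)$, $\zeta K(A)=\int\zeta(d\theta)K(\theta,A)$, and $\zeta k(y)=\int\zeta(d\theta)k(\theta,y)$. Let $p$ be measurable positive on $\mathsf Y$. $f_0(u)=u-1-\log u$, $f_1(u)=1-u+u\log u$, $f_\alpha(u)=\frac{1}{\alpha(\alpha-1)}[u^\alpha-1-\alpha(u-1)]$ otherwise; $\Psi_\alpha(\zeta)=\int_{\mathsf Y}f_\alpha(\zeta k(y)/p(y))p(y)\nu(dy)$. Assumption (A1): $k>0$, $p>0$ everywhere and $\int p\,d\nu<\infty$. *)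

From HB Require Import structures.
From mathcomp Require Import all_boot all_order all_algebra.
From mathcomp Require Import all_classical all_reals all_analysis.
Set Implicit Arguments. Unset Strict Implicit. Unset Printing Implicit Defensive.
Import Order.TTheory GRing.Theory Num.Theory.
Import numFieldNormedType.Exports.
Local Open Scope classical_set_scope.
Local Open Scope ring_scope.

Section Defs.
Context {R : realType} {dT dY : measure_display}
        {T : measurableType dT} {Y : measurableType dY}.

Definition Kker (nu : {measure set Y -> \bar R}) (k : T -> Y -> R)
  (theta : T) (A : set Y) : \bar R :=
  (\int[nu]_(y in A) (k theta y)%:E)%E.

Definition zetaK (nu : {measure set Y -> \bar R}) (k : T -> Y -> R)
  (zeta : probability T R) (A : set Y) : \bar R :=
  (\int[zeta]_theta Kker nu k theta A)%E.

(* zeta k (y) = \int zeta(dtheta) k(theta, y); real-valued via [fine]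
   (it is finite nu-a.e.) *)
Definition zetak (k : T -> Y -> R) (zeta : probability T R) (y : Y) : R :=
  fine (\int[zeta]_theta (k theta y)%:E)%E.

End Defs.

(* the f_alpha divergence generators, used on u > 0 *)
Definition f_alpha {R : realType} (alpha u : R) : R :=
  if alpha == 0 then u - 1 - ln u
  else if alpha == 1 then 1 - u + u * ln u
  else (u `^ alpha - 1 - alpha * (u - 1)) / (alpha * (alpha - 1)).

Definition Psi_alpha {R : realType} {dT dY : measure_display}
  {T : measurableType dT} {Y : measurableType dY}
  (nu : {measure set Y -> \bar R}) (k : T -> Y -> R) (p : Y -> R)
  (alpha : R) (zeta : probability T R) : \bar R :=
  (\int[nu]_y (f_alpha alpha (zetak k zeta y / p y) * p y)%:E)%E.

Definition convex_probs {R : realType} {dT : measure_display}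
  {T : measurableType dT} (M : set (probability T R)) : Prop :=
  forall z1 z2 : probability T R, M z1 -> M z2 ->
  forall t : R, 0 <= t <= 1 ->
  exists z : probability T R, M z /\
    forall A : set T, measurable A ->
      z A = (t%:E * z1 A + (1 - t)%:E * z2 A)%E.

(* Let M be a convex set of probability measures on T and zeta1, zeta2 in M
   both attain the finite infimum I of Psi_alpha over M.  Their equal-weight
   mixture zeta lies in M, so I <= Psi_alpha(zeta).  The density of zeta K
   with respect to nu is the average of those of zeta1 K and zeta2 K, and
   f_alpha is strictly convex, so the integrand of Psi_alpha(zeta) lies
   pointwise below the average of the integrands for zeta1 and zeta2, whose
   integral is I.  Hence the two agree nu-a.e., which by strict convexity
   forces the two densities to agree nu-a.e.; integrating over A gives
   zeta1 K (A) = zeta2 K (A). *)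

From HB Require Import structures.
From mathcomp Require Import all_boot all_order all_algebra.
From mathcomp Require Import all_classical all_reals all_analysis.
From mathcomp Require Import measurable_realfun ring lra.
Import Order.TTheory GRing.Theory Num.Theory.
Import numFieldNormedType.Exports.
Local Open Scope classical_set_scope.
Local Open Scope ring_scope.

Section FAlpha.
Variable R : realType.
Implicit Types a p q r t u v w x y : R.

(* Strict convexity of [expR] in weighted form: the chord lies strictly above
   the graph; derived from the strict tangent-line bound at the barycenter. *)
Lemma expR_wconvex p q x y : 0 < p -> 0 < q -> x != y ->
  (p + q) * expR ((p * x + q * y) / (p + q)) < p * expR x + q * expR y.
Proof.
move=> p0 q0 xy; set c := _ / _.
have pq0 : p + q != 0 by rewrite gt_eqF// addr_gt0.
have tangent z : z != c -> expR c * (1 + (z - c)) < expR z.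
  move=> zc; have -> : expR z = expR c * expR (z - c) by rewrite -expRD addrC subrK.
  by rewrite ltr_pM2l ?expR_gt0// expR_gt1Dx// subr_eq0.
have [xc yc] : x != c /\ y != c.
  by split; apply: contra xy => /eqP E; apply/eqP; move: E; rewrite /c;
    move/(congr1 (fun z => z * (p + q))); rewrite divfK //; nra.
have barycenter : p * (x - c) + q * (y - c) = 0 by rewrite /c; field.
have := tangent x xc; have := tangent y yc; have := expR_gt0 c; nra.
Qed.

(* Strict generalized Bernoulli inequality, in exponential coordinates
   [r = expR t]: [r ^ a - 1 - a (r - 1)] has the sign of [a (a - 1)] for
   [r <> 1].  Each sign regime of [a] is one instance of [expR_wconvex]. *)
Lemma expR_bernoulli a t : a != 0 -> a != 1 -> t != 0 ->
  0 < a * (a - 1) * (expR (a * t) - 1 - a * (expR t - 1)).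
Proof.
move=> a0 a1 t0.
have [a_gt1|a_le1] := ltP 1 a.
  (* [expR t] is the weight-[(1, a - 1)] barycenter of [a t] and [0] *)
  have := @expR_wconvex 1 (a - 1) (a * t) 0; rewrite mulr0 addr0 mul1r expR0.
  have -> : (a * t) / (1 + (a - 1)) = t by rewrite addrC subrK mulrAC divff// mul1r.
  rewrite subr_gt0 mulf_neq0 // => /(_ ltr01 a_gt1 isT) H.
  by apply: mulr_gt0; nra.
have [a_gt0|a_le0] := ltP 0 a.
  have a_lt1 : a < 1 by rewrite lt_neqAle a1.
  (* [expR (a t)] is the weight-[(a, 1 - a)] barycenter of [t] and [0] *)
  have := @expR_wconvex a (1 - a) t 0; rewrite mulr0 addr0 expR0 (addrC a) subrK.
  rewrite divr1 subr_gt0 => /(_ a_gt0 a_lt1 t0) H.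
  by rewrite -mulrA; apply: mulr_gt0 => //; nra.
have a_lt0 : a < 0 by rewrite lt_neqAle a0.
(* [0] is the weight-[(- a, 1)] barycenter of [t] and [a t] *)
have := @expR_wconvex (- a) 1 t (a * t); rewrite mul1r mulNr addNr mul0r expR0.
have at_t : t != a * t by apply: contra a1 => /eqP/esym/eqP; rewrite -subr_eq0
  -{2}[t]mul1r -mulrBl mulf_eq0 (negbTE t0) orbF subr_eq0.
rewrite oppr_gt0 => /(_ a_lt0 ltr01 at_t) H.
by apply: mulr_gt0; nra.
Qed.

Lemma f_alpha1 a : f_alpha a 1 = 0.
Proof. by rewrite /f_alpha ln1 powR1; case: ifP => _; [|case: ifP => _]; lra. Qed.

(* [f_alpha a] vanishes only at [1]: it is the gap between a strictly convex
   function and its tangent at [1]. *)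
Lemma f_alpha_gt0 a r : 0 < r -> r != 1 -> 0 < f_alpha a r.
Proof.
move=> r0 r1; have : ln r != 0 by rewrite ln_eq0.
(* exponential coordinates [r = expR t] *)
rewrite /f_alpha -[r](lnK r0) /powR expR_eq0 !expRK mulrC; set t := ln r => t0.
case: eqVneq => [_|a0]; first by have := expR_gt1Dx t0; lra.
case: eqVneq => [_|a1].
  have := @expR_gt1Dx _ (- t); rewrite oppr_eq0 => /(_ t0).
  rewrite expRN -(ltr_pM2l (expR_gt0 t)) mulfV ?gt_eqF ?expR_gt0//; nra.
have D0 : a * (a - 1) != 0 by rewrite mulf_neq0// subr_eq0.
have := @expR_bernoulli a t a0 a1 t0; set B := _ - _ - _ => B0.
have -> : B / (a * (a - 1)) = a * (a - 1) * B / (a * (a - 1)) ^+ 2.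
  by rewrite expr2; field; rewrite subr_eq0 a1 a0.
by rewrite divr_gt0// lt0r sqrf_eq0 D0 sqr_ge0.
Qed.

Lemma f_alpha_ge0 a r : 0 < r -> 0 <= f_alpha a r.
Proof.
move=> r0; have [->|r1] := eqVneq r 1; first by rewrite f_alpha1.
exact/ltW/f_alpha_gt0.
Qed.

(* The Jensen gap of [f_alpha a] at the midpoint [m] of [m r] and [m s] is
   the rescaled sum [m ^ a (f_alpha a r + f_alpha a s)]: the affine parts of
   [f_alpha a] cancel at a midpoint, and [f_alpha a] is homogeneous up to
   affine terms. *)
Lemma f_alpha_midpoint_gap a m r s : 0 < m -> 0 < r -> 0 < s -> r + s = 2 ->
  f_alpha a (m * r) + f_alpha a (m * s) - 2 * f_alpha a m =
  m `^ a * (f_alpha a r + f_alpha a s).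
Proof.
move=> m0 r0 s0 rs; have -> : s = 2 - r by lra.
rewrite /f_alpha !lnM ?posrE//; last by lra.
have [->|a0] := eqVneq a 0; first by rewrite powRr0; ring.
have [->|a1] := eqVneq a 1; first by rewrite powRr1 ?(ltW m0)//; ring.
rewrite !powRM ?(ltW m0) ?(ltW r0)//; last by lra.
by field; rewrite subr_eq0 a1 a0.
Qed.

Lemma f_alpha_midpoint_lt a u v : 0 < u -> 0 < v -> u != v ->
  f_alpha a (2^-1 * u + 2^-1 * v) < 2^-1 * f_alpha a u + 2^-1 * f_alpha a v.
Proof.
move=> u0 v0 uv; set m := _ + _.
have m0 : 0 < m by rewrite /m; lra.
have mK w : m * (w / m) = w by rewrite mulrC divfK// gt_eqF.
have um : u / m != 1.
  apply: contra uv => /eqP um; have : u = m by rewrite -(mK u) um mulr1.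
  by rewrite /m => ?; apply/eqP; lra.
have rs : u / m + v / m = 2.
  by rewrite -mulrDl /m; field; rewrite gt_eqF//; lra.
have := @f_alpha_midpoint_gap a m (u / m) (v / m) m0.
rewrite !divr_gt0// !mK => /(_ isT isT rs) gap.
have : 0 < m `^ a * (f_alpha a (u / m) + f_alpha a (v / m)).
  rewrite mulr_gt0 ?powR_gt0// ltr_wpDr ?f_alpha_ge0 ?divr_gt0//.
  by rewrite f_alpha_gt0 ?divr_gt0.
by rewrite -gap; lra.
Qed.

Lemma measurable_f_alpha a : measurable_fun setT (f_alpha a).
Proof.
rewrite /f_alpha; have [_|a0] := eqVneq a 0.
  by apply: measurable_funB; [exact: measurable_funB|exact: measurable_ln].
have [_|a1] := eqVneq a 1.
  apply: measurable_funD; first exact: measurable_funB.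
  by apply: measurable_funM => //; exact: measurable_ln.
apply: measurable_funM => //; apply: measurable_funB.
  by apply: measurable_funB => //; exact: measurable_powR.
by apply: measurable_funM => //; exact: measurable_funB.
Qed.

End FAlpha.

Section IntegralGap.
Local Open Scope ereal_scope.

Lemma ae_eq_of_integral_le (R : realType) d (X : measurableType d)
    (mu : {measure set X -> \bar R}) (D : set X) (f g : X -> R) :
  measurable D -> measurable_fun D f -> measurable_fun D g ->
  (forall x, D x -> (0 <= g x <= f x)%R) ->
  \int[mu]_(x in D) (f x)%:E <= \int[mu]_(x in D) (g x)%:E ->
  \int[mu]_(x in D) (g x)%:E < +oo ->
  {ae mu, forall x, D x -> f x = g x}.
Proof.
move=> mD mf mg fg le_fg g_fin.
have mgap : measurable_fun D (fun x => (f x - g x)%:E).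
  by apply/measurable_EFinP; exact: measurable_funB.
have gap0 x : D x -> 0 <= (f x - g x)%:E.
  by move=> /fg /andP[_]; rewrite lee_fin subr_ge0.
have g0 x : D x -> 0 <= (g x)%:E by move=> /fg /andP[]; rewrite lee_fin.
have split_f : \int[mu]_(x in D) (f x)%:E =
    \int[mu]_(x in D) (f x - g x)%:E + \int[mu]_(x in D) (g x)%:E.
  rewrite -ge0_integralD//; last exact/measurable_EFinP.
  by apply: eq_integral => x _; rewrite -EFinD subrK.
have int_gap0 : \int[mu]_(x in D) (f x - g x)%:E = 0.
  apply/eqP; rewrite eq_le integral_ge0// andbT.
  have gfin : \int[mu]_(x in D) (g x)%:E \is a fin_num.
    by rewrite ge0_fin_numE// integral_ge0.
  by rewrite -(leeD2rE _ _ gfin) add0e -split_f.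
have : \int[mu]_(x in D) `|(f x - g x)%:E| = 0.
  by rewrite -int_gap0; apply: eq_integral => x /[!inE] Dx; rewrite gee0_abs// gap0.
move=> /(ae_eq_integral_abs mu mD mgap); apply: filterS => x gapx Dx.
by move: (gapx Dx) => [/eqP]; rewrite subr_eq0 => /eqP.
Qed.

End IntegralGap.

Section KernelMixtures.
Context {R : realType} {dY dT : measure_display}
  {Y : measurableType dY} {T : measurableType dT}
  {nu : {measure set Y -> \bar R}} (nu_sfin : sigma_finite setT nu)
  {k : T -> Y -> R}
  (k_meas : measurable_fun setT (fun q : T * Y => k q.1 q.2))
  (k_pos : forall theta y, 0 < k theta y)
  (k_norm : forall theta, (\int[nu]_y (k theta y)%:E)%E = 1%E).

(* A copy of [nu] carrying its sigma-finiteness as a structure, as required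
   by the Fubini-Tonelli theorem. *)
Definition nu_sf : set Y -> \bar R := nu.
HB.instance Definition _ := Measure.on nu_sf.
HB.instance Definition _ := Measure_isSigmaFinite.Build _ _ _ nu_sf nu_sfin.

Local Open Scope ereal_scope.

Lemma measurable_kE : measurable_fun setT (fun q : T * Y => (k q.1 q.2)%:E).
Proof. exact/measurable_EFinP. Qed.

Lemma kE_ge0 (q : T * Y) : 0 <= (k q.1 q.2)%:E.
Proof. by rewrite lee_fin ltW. Qed.

(* The extended-real density [y |-> \int zeta(dtheta) k(theta, y)] of the
   mixture [zeta K] with respect to [nu]; [zetak k zeta] is its real part. *)
Definition dens (zeta : probability T R) (y : Y) : \bar R :=
  \int[zeta]_theta (k theta y)%:E.

Lemma measurable_dens zeta : measurable_fun setT (dens zeta).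
Proof. exact: measurable_fun_fubini_tonelli_G measurable_kE kE_ge0. Qed.

Lemma dens_ge0 zeta y : 0 <= dens zeta y.
Proof. by apply: integral_ge0 => theta _; rewrite lee_fin ltW. Qed.

Lemma dens_gt0 zeta y : 0 < dens zeta y.
Proof.
rewrite lt0e dens_ge0 andbT; apply/negP => /eqP dens0.
have mk : measurable_fun setT (fun theta => (k theta y)%:E).
  by apply/measurable_EFinP; exact: (measurable_fun_pair1 y k_meas).
have : \int[zeta]_theta `|(k theta y)%:E| = 0.
  by rewrite -dens0; apply: eq_integral => theta _; rewrite gee0_abs// lee_fin ltW.
move=> /(ae_eq_integral_abs zeta measurableT mk) [N [mN N0 kN]].
have : zeta setT <= zeta N.
  apply: le_measure; rewrite ?inE//= => theta _; apply: kN => /(_ I) /eqP.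
  by rewrite eqe gt_eqF.
by rewrite N0 probability_setT lee_fin ler10.
Qed.

(* By Tonelli, [zeta K] is a probability measure, so its density integrates
   to one ... *)
Lemma integral_dens zeta : \int[nu]_y dens zeta y = 1.
Proof.
have := fubini_tonelli (m1 := zeta) (m2 := nu_sf) _ measurable_kE kE_ge0.
rewrite /= => <-.
under eq_integral do rewrite k_norm.
by rewrite integral_cst// mul1e; exact: probability_setT.
Qed.

Lemma dens_fin_ae zeta : {ae nu, forall y, dens zeta y \is a fin_num}.
Proof.
have : nu.-integrable setT (dens zeta).
  apply/integrableP; split; first exact: measurable_dens.
  under eq_integral do rewrite gee0_abs ?dens_ge0//.
  by rewrite integral_dens ltey.
by move=> /(integrable_ae measurableT); apply: filterS => y; exact.
Qed.

Lemma zetaK_dens zeta A : measurable A ->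
  zetaK nu k zeta A = \int[nu]_(y in A) dens zeta y.
Proof.
move=> mA; pose kA (q : T * Y) := (k q.1 q.2 * \1_A q.2)%:E.
have mkA : measurable_fun setT kA.
  apply/measurable_EFinP; apply: measurable_funM => //.
  by apply: measurableT_comp; [exact: measurable_indic|exact: measurable_snd].
have kA0 q : 0 <= kA q by rewrite lee_fin mulr_ge0// ?ltW// indicE.
transitivity (\int[zeta]_theta \int[nu_sf]_y kA (theta, y)).
  apply: eq_integral => theta _; rewrite /Kker integral_mkcond.
  apply: eq_integral => y _; rewrite /kA patchE /= indicE.
  by case: ifP; rewrite ?mulr1 ?mulr0.
rewrite (fubini_tonelli (m1 := zeta) (m2 := nu_sf) _ mkA kA0) integral_mkcond.
apply: eq_integral => y _; rewrite /dens /kA patchE /= indicE.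
case: ifPn => yA; first by apply: eq_integral => theta _; rewrite mulr1.
by under eq_integral do rewrite mulr0; exact: integral0.
Qed.

Lemma dens_mix (zeta zeta1 zeta2 : probability T R) :
  (forall A, measurable A ->
    zeta A = (2^-1)%:E * zeta1 A + (1 - 2^-1)%:E * zeta2 A) ->
  forall y, dens zeta y = (2^-1)%:E * dens zeta1 y + (2^-1)%:E * dens zeta2 y.
Proof.
move=> zetaE y.
have half_ge0 : (0 <= 2^-1 :> R)%R by rewrite invr_ge0.
pose h : {nonneg R} := NngNum half_ge0.
pose mix := measure_add (mscale h zeta1) (mscale h zeta2).
have mk : measurable_fun setT (fun theta => (k theta y)%:E).
  by apply/measurable_EFinP; exact: (measurable_fun_pair1 y k_meas).
have k0 theta : [set: T] theta -> 0 <= (k theta y)%:E by rewrite lee_fin ltW.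
rewrite /dens (eq_measure_integral mix); last first.
  move=> A mA _; transitivity (mscale h zeta1 A + mscale h zeta2 A).
    rewrite /mscale /= zetaE//.
    by have -> : (1 - 2^-1 = 2^-1 :> R)%R by field.
  exact/esym/measure_addE.
by rewrite ge0_integral_measure_add// !ge0_integral_mscale.
Qed.

Lemma densE zeta y : dens zeta y \is a fin_num -> dens zeta y = (zetak k zeta y)%:E.
Proof. by move=> fin; rewrite /zetak fineK. Qed.

Lemma zetak_gt0 zeta y : dens zeta y \is a fin_num -> (0 < zetak k zeta y)%R.
Proof. by move=> fin; rewrite -lte_fin -densE// dens_gt0. Qed.

Definition fin_dens2 (zeta1 zeta2 : probability T R) : set Y :=
  [set y | dens zeta1 y \is a fin_num] `&` [set y | dens zeta2 y \is a fin_num].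

Lemma measurable_fin_dens2 zeta1 zeta2 : measurable (fin_dens2 zeta1 zeta2).
Proof.
by apply: measurableI; rewrite -[X in measurable X]setTI;
  apply: emeasurable_fin_num => //; exact: measurable_dens.
Qed.

Lemma fin_dens2_ae zeta1 zeta2 : {ae nu, forall y, fin_dens2 zeta1 zeta2 y}.
Proof. by apply: filterS2 (dens_fin_ae zeta1) (dens_fin_ae zeta2) => y. Qed.

Context {p : Y -> R} (p_meas : measurable_fun setT p)
  (p_pos : forall y, (0 < p y)%R) {alpha : R}.

Definition psi_integrand (zeta : probability T R) (y : Y) : R :=
  (f_alpha alpha (zetak k zeta y / p y) * p y)%R.

Lemma measurable_psi_integrand zeta : measurable_fun setT (psi_integrand zeta).
Proof.
apply: measurable_funM => //; apply: measurableT_comp; first exact: measurable_f_alpha.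
apply: measurable_funM; first by apply: measurableT_comp => //; exact: measurable_dens.
rewrite (_ : (fun y => (p y)^-1)%R = (fun y => p y `^ (-1))%R); last first.
  by apply/funext => y; rewrite powR_inv1// ltW.
exact: measurableT_comp (measurable_powR _) p_meas.
Qed.

Lemma Psi_alpha_restrict zeta D : measurable D -> {ae nu, forall y, D y} ->
  Psi_alpha nu k p alpha zeta = \int[nu]_(y in D) (psi_integrand zeta y)%:E.
Proof.
move=> mD aeD; rewrite integral_mkcond; apply: ae_eq_integral => //.
- exact/measurable_EFinP/measurable_psi_integrand.
- apply/(measurable_restrictT _ mD).
  exact/measurable_funTS/measurable_EFinP/measurable_psi_integrand.
- by apply: filterS aeD => y Dy _; rewrite patchE mem_set.
Qed.

Lemma psi_integrand_ge0 zeta y : dens zeta y \is a fin_num ->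
  (0 <= psi_integrand zeta y)%R.
Proof.
move=> fin; rewrite mulr_ge0 ?f_alpha_ge0 ?divr_gt0 ?zetak_gt0 //.
exact/ltW.
Qed.

Section EqualMixture.
Context {zeta zeta1 zeta2 : probability T R}.
Hypothesis zetaE : forall A, measurable A ->
  zeta A = (2^-1)%:E * zeta1 A + (1 - 2^-1)%:E * zeta2 A.

Lemma zetak_mix y : fin_dens2 zeta1 zeta2 y ->
  zetak k zeta y = (2^-1 * zetak k zeta1 y + 2^-1 * zetak k zeta2 y)%R.
Proof.
move=> [/= /densE fin1 /densE fin2]; transitivity (fine (dens zeta y)) => //.
by rewrite (dens_mix _ _ _ zetaE) fin1 fin2 -!EFinM -EFinD.
Qed.

Lemma psi_integrand_mix_lt y : fin_dens2 zeta1 zeta2 y ->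
  dens zeta1 y != dens zeta2 y ->
  (psi_integrand zeta y < 2^-1 * psi_integrand zeta1 y +
                          2^-1 * psi_integrand zeta2 y)%R.
Proof.
move=> Dy neq; have [/= fin1 fin2] := Dy.
have py := p_pos y.
rewrite /psi_integrand zetak_mix// mulrDl !mulrA -!mulrDl ltr_pM2r//.
have -> : ((2^-1 * zetak k zeta1 y + 2^-1 * zetak k zeta2 y) / p y =
  2^-1 * (zetak k zeta1 y / p y) + 2^-1 * (zetak k zeta2 y / p y))%R.
  by rewrite mulrDl !mulrA.
apply: f_alpha_midpoint_lt; rewrite ?divr_gt0 ?zetak_gt0//.
apply: contra neq => /eqP eq12; rewrite densE// densE//.
by apply/eqP; congr EFin; apply: (mulIf (invr_neq0 (lt0r_neq0 py))).
Qed.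

Lemma psi_integrand_mix_le y : fin_dens2 zeta1 zeta2 y ->
  (psi_integrand zeta y <= 2^-1 * psi_integrand zeta1 y +
                           2^-1 * psi_integrand zeta2 y)%R.
Proof.
move=> Dy; have [eq12|neq] := eqVneq (dens zeta1 y) (dens zeta2 y).
  have [/= fin1 fin2] := Dy.
  have eqk : zetak k zeta1 y = zetak k zeta2 y by exact: (congr1 fine eq12).
  have half2 : (2^-1 + 2^-1 = 1 :> R)%R by field.
  by rewrite /psi_integrand zetak_mix// eqk -!mulrDl half2 !mul1r.
exact/ltW/psi_integrand_mix_lt.
Qed.

Lemma fin_dens_mix y : fin_dens2 zeta1 zeta2 y -> dens zeta y \is a fin_num.
Proof.
by move=> [/= fin1 fin2]; rewrite (dens_mix _ _ _ zetaE) fin_numD !fin_numM.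
Qed.

(* Two measures with the same finite value [I] of [Psi_alpha], whose
   equal-weight mixture does not do better, have the same density [nu]-a.e.:
   the integrated convexity inequality is an equality, hence holds
   pointwise a.e., and strict convexity then forces the densities to agree. *)
Lemma mixture_dens_ae {I : \bar R} :
  Psi_alpha nu k p alpha zeta1 = I -> Psi_alpha nu k p alpha zeta2 = I ->
  I < +oo -> I <= Psi_alpha nu k p alpha zeta ->
  {ae nu, forall y, dens zeta1 y = dens zeta2 y}.
Proof.
move=> Psi1 Psi2 I_fin I_le; set D := fin_dens2 zeta1 zeta2.
have mD : measurable D := measurable_fin_dens2 zeta1 zeta2.
have aeD : {ae nu, forall y, D y} := fin_dens2_ae zeta1 zeta2.
rewrite (Psi_alpha_restrict _ _ mD aeD) in Psi1.
rewrite (Psi_alpha_restrict _ _ mD aeD) in Psi2.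
rewrite (Psi_alpha_restrict _ _ mD aeD) in I_le.
pose avg y : R := (2^-1 * psi_integrand zeta1 y + 2^-1 * psi_integrand zeta2 y)%R.
have mpsi z : measurable_fun D (fun y => (psi_integrand z y)%:E).
  exact/measurable_funTS/measurable_EFinP/measurable_psi_integrand.
have psi0 z y : dens z y \is a fin_num -> 0 <= (psi_integrand z y)%:E.
  by move=> fin; rewrite lee_fin psi_integrand_ge0.
have [r Ir] : exists r, I = r%:E.
  have I0 : 0 <= I by rewrite -Psi1; apply: integral_ge0 => y [/= ? _]; exact: psi0.
  by exists (fine I); rewrite fineK// ge0_fin_numE.
have int_avg : \int[nu]_(y in D) (avg y)%:E = I.
  under eq_integral do rewrite EFinD (EFinM (2^-1)) (EFinM (2^-1)).
  rewrite ge0_integralD//; last 4 first.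
  - by move=> y [/= ? _]; rewrite mule_ge0 ?psi0.
  - exact: emeasurable_funM.
  - by move=> y [/= _ ?]; rewrite mule_ge0 ?psi0.
  - exact: emeasurable_funM.
  rewrite !ge0_integralZl_EFin//; last 2 first.
  - by move=> y [/= _ ?]; exact: psi0.
  - by move=> y [/= ? _]; exact: psi0.
  rewrite Psi1 Psi2.
  by rewrite Ir -!EFinM -EFinD; congr EFin; field.
have avg_eq : {ae nu, forall y, D y -> avg y = psi_integrand zeta y}.
  apply: ae_eq_of_integral_le => //.
  - apply: measurable_funD; apply: measurable_funM => //;
      exact/measurable_funTS/measurable_psi_integrand.
  - exact/measurable_funTS/measurable_psi_integrand.
  - move=> y Dy; rewrite psi_integrand_ge0 ?fin_dens_mix//=.
    exact: psi_integrand_mix_le.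
  - by rewrite int_avg.
  - apply: le_lt_trans I_fin; rewrite -int_avg.
    apply: ge0_le_integral => //.
    + by move=> y Dy; apply/psi0/fin_dens_mix.
    + apply/measurable_EFinP/measurable_funD;
        apply: measurable_funM => //; exact/measurable_funTS/measurable_psi_integrand.
    + by move=> y Dy; rewrite lee_fin psi_integrand_mix_le.
apply: filterS2 aeD avg_eq => y Dy /(_ Dy) eq_y.
apply/eqP; apply: contraPP eq_y => /negP neq.
by apply/eqP; rewrite gt_eqF// psi_integrand_mix_lt.
Qed.

End EqualMixture.

End KernelMixtures.

Arguments dens {R dY dT Y T} k zeta y.

Theorem mainTheorem5 (R : realType) (dY dT : measure_display)
  (Y : measurableType dY) (T : measurableType dT)
  (nu : {measure set Y -> \bar R}) (nu_sfin : sigma_finite setT nu)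
  (k : T -> Y -> R)
  (k_meas : measurable_fun setT (fun q : T * Y => k q.1 q.2))
  (k_pos : forall theta y, 0 < k theta y)
  (k_norm : forall theta, (\int[nu]_y (k theta y)%:E)%E = 1%E)
  (p : Y -> R) (p_meas : measurable_fun setT p)
  (p_pos : forall y, 0 < p y)
  (p_int : (\int[nu]_y (p y)%:E < +oo)%E)
  (alpha : R)
  (M : set (probability T R)) (M_convex : convex_probs M)
  (zeta1 zeta2 : probability T R) (M1 : M zeta1) (M2 : M zeta2)
  (H1 : Psi_alpha nu k p alpha zeta1 = ereal_inf [set Psi_alpha nu k p alpha z | z in M])
  (H2 : Psi_alpha nu k p alpha zeta2 = ereal_inf [set Psi_alpha nu k p alpha z | z in M])
  (Hfin : (ereal_inf [set Psi_alpha nu k p alpha z | z in M] < +oo)%E) :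
  forall A : set Y, measurable A -> zetaK nu k zeta1 A = zetaK nu k zeta2 A.
Proof.
move=> A mA.
have half01 : 0 <= (2^-1 : R) <= 1 by rewrite invr_ge0 invf_le1 ?ler0n ?ler1n.
have [zeta [Mzeta zetaE]] := M_convex zeta1 zeta2 M1 M2 _ half01.
have inf_le : (ereal_inf [set Psi_alpha nu k p alpha z | z in M] <=
               Psi_alpha nu k p alpha zeta)%E.
  by apply: ereal_inf_lbound; exists zeta.
have same_dens := mixture_dens_ae nu_sfin k_meas k_pos k_norm p_meas p_pos
  zetaE H1 H2 Hfin inf_le.
rewrite !(zetaK_dens nu_sfin k_meas k_pos _ _ mA).
apply: ae_eq_integral => //.
- exact/measurable_funTS/measurable_dens.
- exact/measurable_funTS/measurable_dens.
- by apply: filterS same_dens => y + _.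
Qed.
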